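(* Let $G=(V,E)$ be a connected simple graph with a set-valued metric $\Omega(-,-)$. Then $d_G(x,y)\ge|\Omega(x,y)|$ for all $x,y\in V$, where $d_G$ is the graph distance.
   Context: For a connected simple graph $G=(V,E)$ and a set $\Omega$, a set-valued metric on $G$ is a function $\Omega(-,-):V\times V\to 2^{\Omega}$ such that $\Omega(x,y)=\Omega(y,x)$ for all $x,y$; $|\Omega(x,y)|=1$ whenever $\{x,y\}\in E$; and $\Omega(x,z)=\Omega(x,y)\triangle\Omega(y,z)$ for all $x,y,z$, where $\triangle$ is symmetric difference. *)

From mathcomp Require Import all_boot.
From Stdlib Require List.
Set Implicit Arguments. Unset Strict Implicit. Unset Printing Implicit Defensive.

Definition simple_graph (T : finType) (e : rel T) : Prop :=
  symmetric e /\ irreflexive e.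

Definition connected_graph (T : finType) (e : rel T) : Prop :=
  forall x y : T, connect e x y.

(* Subsets of the set Omega (here a type W) are predicates W -> Prop. *)
Definition subsetW (W : Type) := W -> Prop.

Definition has_card (W : Type) (A : subsetW W) (n : nat) : Prop :=
  exists s : list W, List.NoDup s /\ (forall w, A w <-> List.In w s) /\ List.length s = n.

Definition symdiff (W : Type) (A B : subsetW W) : subsetW W :=
  fun w => (A w /\ ~ B w) \/ (B w /\ ~ A w).

Definition set_valued_metric (T : finType) (e : rel T) (W : Type)
  (Om : T -> T -> subsetW W) : Prop :=
  (forall x y w, Om x y w <-> Om y x w) /\
  (forall x y, e x y -> has_card (Om x y) 1) /\
  (forall x y z w, Om x z w <-> symdiff (Om x y) (Om y z) w).

Definition walk_of_length (T : finType) (e : rel T) (x y : T) (n : nat) : bool :=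
  [exists p : n.-tuple T, path e x p && (last x p == y)].

Lemma walk_exists (T : finType) (e : rel T) (x y : T) :
  connect e x y -> exists n, walk_of_length e x y n.
Proof.
move=> /connectP [p pp ->]; exists (size p).
by apply/existsP; exists (in_tuple p); rewrite /= pp eqxx.
Qed.

Definition gdist (T : finType) (e : rel T) (x y : T) (h : connect e x y) : nat :=
  ex_minn (walk_exists h).

From Stdlib Require Import Classical List.
From mathcomp Require Import all_boot.

Set Implicit Arguments.
Unset Strict Implicit.
Unset Printing Implicit Defensive.

(* Along a walk [x = v_0, v_1, ..., v_k = y] the set-valued triangle law gives
   Omega(x, y) = Omega(v_0, v_1) Δ ... Δ Omega(v_{k-1}, v_k), a symmetric
   difference of k singletons, and each symmetric difference with a singleton
   raises the cardinality by at most one. Applying this to a shortest walk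
   bounds |Omega(x, y)| by the graph distance. *)

Section Cardinality.

Variable W : Type.

Lemma has_card_ext (A B : subsetW W) n :
  (forall w, A w <-> B w) -> has_card A n -> has_card B n.
Proof.
move=> AB [s [nd_s [As len_s]]]; exists s; split=> //; split=> // w.
by rewrite -AB.
Qed.

Lemma has_card0 (A : subsetW W) : (forall w, ~ A w) -> has_card A 0.
Proof.
move=> A0; exists nil; split; first constructor.
by split=> // w; split=> [/A0|].
Qed.

Lemma has_card1P (A : subsetW W) :
  has_card A 1 -> exists a, forall w, A w <-> w = a.
Proof.
case=> [[|a [|b s]]] [_ [As len_s]] //; exists a => w.
by rewrite As /=; split=> [[]|] // ->; left.
Qed.

Lemma has_card_symdiff1_notin (A : subsetW W) a n :
  ~ A a -> has_card A n -> has_card (symdiff (eq^~ a) A) n.+1.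
Proof.
move=> Aa [s [nd_s [As len_s]]]; exists (a :: s).
split; first by constructor=> // /As.
split; last by rewrite /= len_s.
move=> w; rewrite /symdiff As /=; split.
- by case=> [[-> _]|[sw _]]; [left|right].
- case=> [<-|sw]; first by left; split=> // /As.
  by right; split=> // wa; apply: Aa; rewrite As -wa.
Qed.

Lemma has_card_symdiff1_in (A : subsetW W) a n :
  A a -> has_card A n -> has_card (symdiff (eq^~ a) A) n.-1.
Proof.
move=> Aa [s [nd_s [As len_s]]].
have [s1 [s2 def_s]] := in_split a s (proj1 (As a) Aa); subst s.
exists (s1 ++ s2); split; first exact: NoDup_remove_1 nd_s.
split; last by rewrite -len_s !length_app /= -plus_n_Sm.
have s12a := NoDup_remove_2 _ _ _ nd_s.
move=> w; rewrite /symdiff As; split.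
- case=> [[-> ninA]|[sw wa]]; first by case: ninA; apply: in_elt.
  apply: in_or_app; case: (in_app_or _ _ _ sw) => [|[aw|]]; by [left|case: wa|right].
- move=> sw; right; split; last by move=> wa; subst w; apply: s12a.
  by apply: in_or_app; case: (in_app_or _ _ _ sw) => ?; [left|right; right].
Qed.

Lemma has_card_symdiff_card1 (A B : subsetW W) n :
  has_card B 1 -> has_card A n ->
  exists m, has_card (symdiff B A) m /\ m <= n.+1.
Proof.
move=> /has_card1P [a Ba] An.
have symdiffBA w : symdiff (eq^~ a) A w <-> symdiff B A w.
  by rewrite /symdiff Ba.
case: (classic (A a)) => [Aa|Aa].
- exists n.-1; split; last exact: leq_trans (leq_pred n) (leqnSn n).
  exact: has_card_ext symdiffBA (has_card_symdiff1_in Aa An).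
- exists n.+1; split=> //.
  exact: has_card_ext symdiffBA (has_card_symdiff1_notin Aa An).
Qed.

End Cardinality.

Section SetValuedMetric.

Variables (T : finType) (e : rel T) (W : Type) (Om : T -> T -> subsetW W).
Hypothesis Om_metric : set_valued_metric e Om.

Lemma set_valued_metric_diag x : has_card (Om x x) 0.
Proof.
case: Om_metric => _ [_ Om_tri]; apply: has_card0 => w.
by rewrite (Om_tri x x x w) /symdiff; case=> [] [].
Qed.

Lemma set_valued_metric_path_card x p : path e x p ->
  exists m, has_card (Om x (last x p)) m /\ m <= size p.
Proof.
case: Om_metric => _ [Om_edge Om_tri].
elim: p x => [|z p IHp] x /=.
  by exists 0; split; first exact: set_valued_metric_diag.
case/andP=> exz /IHp [m [Om_zy le_m_p]].
have [k [Om_xzy le_k_m]] := has_card_symdiff_card1 (Om_edge _ _ exz) Om_zy.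
exists k; split; last exact: leq_trans le_k_m _.
by apply: has_card_ext Om_xzy => w; rewrite (Om_tri x z).
Qed.

End SetValuedMetric.

Theorem proposition3p5 (T : finType) (e : rel T) (W : Type)
  (Om : T -> T -> subsetW W) (hs : simple_graph e) (hc : connected_graph e) :
  set_valued_metric e Om ->
  forall x y : T, exists n : nat, has_card (Om x y) n /\ n <= gdist (hc x y).
Proof.
move=> Om_metric x y; rewrite /gdist; case: ex_minnP => d.
case/existsP=> p /andP[walk_p /eqP last_p] _.
have [m [Om_xy le_m_p]] := set_valued_metric_path_card Om_metric walk_p.
by exists m; rewrite size_tuple -last_p in le_m_p *.
Qed.
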